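(* Consider a general-utility objective $G(\pi)=\mathcal{F}(\mu^\pi)$ as in the context and assume: (i) $\rho(s)\ge\rho_{\min}>0$ for all $s$; (ii) for every policy $\pi$, all entries of $\Gamma(\pi)$ lie in $[0,U]$ for some $U\ge0$; (iii) $G$ is $L$-smooth with respect to the Euclidean norm, i.e. $|G(\pi)-G(\pi')-\langle\nabla_\pi G(\pi'),\pi-\pi'\rangle|\le\frac{L}{2}\|\pi-\pi'\|_2^2$ for all policies $\pi,\pi'$. Let $\pi^*\in\arg\max_\pi G(\pi)$, let $\pi_0$ be an arbitrary policy and for $k\ge0$ let $\pi_{k+1}$ be obtained from $\pi_k$ by the projected Q-ascent update with step size $\eta=\rho_{\min}/L$. Then for every $K\ge1$, $$G(\pi^* )-G(\pi_K)\le\frac{32\,L\,\big(1+\frac{1}{(1-\gamma)\rho_{\min}}\big)}{(1-\gamma)^2\,\rho_{\min}\,K}.$$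
   Context: Finite MDP with state space $\mathcal{S}$, action space $\mathcal{A}$, transition kernel $\mathcal{P}$, initial distribution $\rho$, discount $\gamma\in[0,1)$. Policies are tables $\pi=(\pi(a\mid s))$ with $\pi(\cdot\mid s)\in\Delta_{\mathcal{A}}$, viewed as vectors in $\mathbb{R}^{|\mathcal{S}||\mathcal{A}|}$. The state-action occupancy measure is $\mu^\pi(s,a)=\sum_{s_0}\rho(s_0)\sum_{\tau\ge0}\gamma^\tau\Pr^\pi[s_\tau=s,a_\tau=a\mid s_0]$; $\mathcal{K}$ is the (convex) set of all occupancy measures, and $\pi\mapsto\mu^\pi$ is a bijection onto $\mathcal{K}$ with inverse $\pi(a\mid s)=\mu^\pi(s,a)/\sum_{a'}\mu^\pi(s,a')$. $\mathcal{F}:\mathcal{K}\to\mathbb{R}$ is concave and differentiable, $G(\pi)=\mathcal{F}(\mu^\pi)$, and the pseudo-reward is $\Gamma(\pi)=\nabla\mathcal{F}(\mu^\pi)\in\mathbb{R}^{\mathcal{S}\times\mathcal{A}}$. For a bounded $u$, $Q^\pi_u(s,a)=\mathbb{E}[\sum_{\tau\ge0}\gamma^\tau u(s_\tau,a_\tau)\mid s_0=s,a_0=a]$ under $\mathcal{P}$ and $\pi$. Projected Q-ascent (PQA) update: for every $s\in\mathcal{S}$, $\pi_{k+1}(\cdot\mid s)=\mathrm{Proj}_{\Delta_{\mathcal{A}}}\big[\pi_k(\cdot\mid s)+\eta\,Q^{\pi_k}_{\Gamma(\pi_k)}(s,\cdot)\big]$, with $\mathrm{Proj}_{\Delta_{\mathcal{A}}}$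 the Euclidean projection onto the probability simplex. *)

From HB Require Import structures.
From mathcomp Require Import all_boot all_order all_algebra.
From mathcomp Require Import all_classical all_reals all_analysis.
Set Implicit Arguments. Unset Strict Implicit. Unset Printing Implicit Defensive.
Import Order.TTheory GRing.Theory Num.Theory.
Import numFieldNormedType.Exports.
Local Open Scope ring_scope.

Section MDP.
Variables (R : realType) (n m : nat).
(* transition kernel: P s a s' = P(s' | s, a) *)
Variable (P : 'I_n -> 'I_m -> 'I_n -> R).

Definition is_kernel : Prop :=
  (forall s a s', 0 <= P s a s') /\ (forall s a, \sum_(s' < n) P s a s' = 1).

Definition is_distr (rho : 'I_n -> R) : Prop :=
  (forall s, 0 <= rho s) /\ \sum_(s < n) rho s = 1.

Definition in_simplex (p : 'I_m -> R) : Prop :=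
  (forall a, 0 <= p a) /\ \sum_(a < m) p a = 1.

Definition is_policy (pi : 'M[R]_(n, m)) : Prop :=
  forall s, in_simplex (fun a => pi s a).

Fixpoint state_dist (rho : 'I_n -> R) (pi : 'M[R]_(n, m)) (t : nat) : 'I_n -> R :=
  match t with
  | 0 => rho
  | t'.+1 => fun s' => \sum_(s < n) \sum_(a < m)
               state_dist rho pi t' s * pi s a * P s a s'
  end.

Definition occ (gamma : R) (rho : 'I_n -> R) (pi : 'M[R]_(n, m)) : 'M[R]_(n, m) :=
  \matrix_(s, a) limn (series (fun t : nat => gamma ^+ t * (state_dist rho pi t s * pi s a))).

(* Pr^pi[s_t = s', a_t = a' | s_0 = s, a_0 = a] *)
Fixpoint sa_dist (pi : 'M[R]_(n, m)) (s : 'I_n) (a : 'I_m) (t : nat)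
  : 'I_n -> 'I_m -> R :=
  match t with
  | 0 => fun s' a' => ((s' == s) && (a' == a))%:R
  | t'.+1 => fun s'' a'' => \sum_(s' < n) \sum_(a' < m)
               sa_dist pi s a t' s' a' * P s' a' s'' * pi s'' a''
  end.

Definition Qfun (gamma : R) (pi : 'M[R]_(n, m)) (u : 'M[R]_(n, m))
  (s : 'I_n) (a : 'I_m) : R :=
  limn (series (fun t : nat => gamma ^+ t *
     (\sum_(s' < n) \sum_(a' < m) sa_dist pi s a t s' a' * u s' a'))).

Definition occ_set (gamma : R) (rho : 'I_n -> R) : set 'M[R]_(n, m) :=
  [set mu | exists pi, is_policy pi /\ mu = occ gamma rho pi].

Definition grad (f : 'M[R]_(n, m) -> R) (x : 'M[R]_(n, m)) : 'M[R]_(n, m) :=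
  \matrix_(s, a) derive f x (delta_mx s a).

Definition frob_inner (x y : 'M[R]_(n, m)) : R :=
  \sum_(s < n) \sum_(a < m) x s a * y s a.

Definition sqnorm2 (x : 'M[R]_(n, m)) : R := frob_inner x x.

Definition Gobj (F : 'M[R]_(n, m) -> R) gamma rho (pi : 'M[R]_(n, m)) : R :=
  F (occ gamma rho pi).

Definition pseudo_reward (F : 'M[R]_(n, m) -> R) gamma rho (pi : 'M[R]_(n, m))
  : 'M[R]_(n, m) := grad F (occ gamma rho pi).

Definition is_simplex_proj (y q : 'I_m -> R) : Prop :=
  in_simplex q /\
  forall p, in_simplex p ->
    \sum_(a < m) (q a - y a) ^+ 2 <= \sum_(a < m) (p a - y a) ^+ 2.

Definition pqa_step F gamma rho (eta : R) (pik pik1 : 'M[R]_(n, m)) : Prop :=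
  forall s, is_simplex_proj
    (fun a => pik s a + eta * Qfun gamma pik (pseudo_reward F gamma rho pik) s a)
    (fun a => pik1 s a).

End MDP.

(* Write d^pi for the discounted state occupancy, so that mu^pi(s,a) = d^pi(s) pi(a|s).
   The performance difference identity
     <u, mu^pi' - mu^pi> = sum_s d^pi'(s) <pi'(s) - pi(s), Q^pi_u(s)>
   yields the Lipschitz continuity of pi |-> mu^pi and, by computing the right
   derivative of h |-> G(pi + h (pi' - pi)) once through the smoothness of G and once
   through the differentiability of F, the policy gradient
     <grad G(pi), pi' - pi> = sum_s d^pi(s) <pi'(s) - pi(s), Q^pi_{Gamma(pi)}(s)>.
   The PQA step maximises, state by state, the proximal surrogate
     G(pi_k) + sum_s d^pi_k(s) (<pi(s) - pi_k(s), Q_k(s)> - |pi(s) - pi_k(s)|^2 / (2 eta)),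
   which lies below G because d^pi_k >= rho_min = eta L.  Evaluating the surrogate at
   the policy whose occupancy is alpha mu^pistar + (1 - alpha) mu^pi_k, and using the
   concavity of F there, gives
     G(pi_{k+1}) >= alpha G(pistar) + (1 - alpha) G(pi_k) - alpha^2 C,
   and the Frank-Wolfe recursion with alpha = 2 / (k + 1) gives the O(1/K) rate. *)

From HB Require Import structures.
From mathcomp Require Import all_boot all_order all_algebra.
From mathcomp Require Import all_classical all_reals all_analysis.
From mathcomp Require Import ring lra.
Set Implicit Arguments. Unset Strict Implicit. Unset Printing Implicit Defensive.
Import Order.TTheory GRing.Theory Num.Theory.
Import numFieldNormedType.Exports.
Local Open Scope classical_set_scope.
Local Open Scope ring_scope.

Section discounted_sum.
Variable R : realType.

Definition disc_sum (g : R) (u : nat -> R) : R :=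
  limn (series (fun t => g ^+ t * u t)).

Lemma cvg_sum_fin (I : finType) (u : I -> nat -> R) (l : I -> R) :
  (forall i, u i @ \oo --> l i) -> (fun N => \sum_i u i N) @ \oo --> \sum_i l i.
Proof.
move=> ul; elim: (index_enum I) => [|i s IHs].
  by rewrite big_nil; under eq_fun do rewrite big_nil; exact: cvg_cst.
by rewrite big_cons; under eq_fun do rewrite big_cons; exact: cvgD.
Qed.

Variables (g : R) (B : R) (u : nat -> R).
Hypothesis g01 : 0 <= g < 1.
Hypothesis u0B : forall t, 0 <= u t <= B.

Lemma disc_partial_sum_le N : \sum_(t < N) g ^+ t * u t <= B / (1 - g).
Proof.
case/andP: g01 => g0 g1; have g1' : 0 < 1 - g by rewrite subr_gt0.
have B0 : 0 <= B by case/andP: (u0B 0) => /le_trans; apply.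
apply: (@le_trans _ _ (\sum_(t < N) g ^+ t * B)).
  apply: ler_sum => t _; apply: ler_wpM2l; first exact: exprn_ge0.
  by case/andP: (u0B t).
have -> : \sum_(t < N) g ^+ t * B = B * series (geometric 1 g) N.
  by rewrite seriesEord mulr_sumr; apply: eq_bigr => t _ /=; rewrite mul1r mulrC.
rewrite geometric_seriesE ?lt_eqF //= mul1r mulrA ler_pM2r ?invr_gt0 //.
by rewrite -[leRHS]mulr1 ler_wpM2l // gerBl exprn_ge0.
Qed.

Lemma is_cvg_disc_sum : cvgn (series (fun t => g ^+ t * u t)).
Proof.
case/andP: g01 => g0 _; apply: nondecreasing_is_cvgn.
  rewrite seriesEnat; apply: (@nondecreasing_series _ _ xpredT) => t _ _.
  by rewrite mulr_ge0 ?exprn_ge0 //; case/andP: (u0B t).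
by exists (B / (1 - g)) => _ [N _ <-]; rewrite seriesEord; exact: disc_partial_sum_le.
Qed.

Lemma disc_sum_bounds : 0 <= disc_sum g u <= B / (1 - g).
Proof.
case/andP: g01 => g0 _; apply/andP; split.
  apply: limr_ge; first exact: is_cvg_disc_sum.
  apply: nearW => N; rewrite seriesEord; apply: sumr_ge0 => t _.
  by rewrite mulr_ge0 ?exprn_ge0 //; case/andP: (u0B t).
apply: limr_le; first exact: is_cvg_disc_sum.
by apply: nearW => N; rewrite seriesEord; exact: disc_partial_sum_le.
Qed.

End discounted_sum.

Lemma disc_sum_rec (R : realType) (g : R) (I : finType) (u : nat -> R)
    (c : I -> R) (v : I -> nat -> R) :
  (forall i, cvgn (series (fun t => g ^+ t * v i t))) ->
  (forall t, u t.+1 = \sum_i c i * v i t) ->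
  disc_sum g u = u 0%N + g * \sum_i c i * disc_sum g (v i).
Proof.
move=> v_cvg uS; apply: cvg_lim => //; rewrite -cvg_shiftS.
have -> : [sequence series (fun t => g ^+ t * u t) n.+1]_n =
    (fun N => u 0%N + g * \sum_i c i * series (fun t => g ^+ t * v i t) N).
  apply: funext => N; rewrite !seriesEord /= big_ord_recl /= expr0 mul1r.
  congr (_ + _); under eq_bigr do rewrite /bump /= exprS uS -mulrA.
  rewrite -mulr_sumr; congr (g * _).
  under [RHS]eq_bigr do rewrite seriesEord mulr_sumr.
  rewrite [RHS]exchange_big; apply: eq_bigr => t _ /=.
  by rewrite mulr_sumr; apply: eq_bigr => i _; ring.
apply: cvgD; first exact: cvg_cst.
by apply: cvgMl_tmp; apply: cvg_sum_fin => i; apply: cvgMl_tmp.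
Qed.

Section state_occupancy.
Variables (R : realType) (n m : nat) (P : 'I_n -> 'I_m -> 'I_n -> R).
Variables (rho : 'I_n -> R) (gamma : R).
Hypothesis kP : is_kernel P.

Lemma sum_kernel_policy (pi : 'M[R]_(n, m)) (f : 'I_n -> R) : is_policy pi ->
  \sum_s' \sum_s \sum_a f s * pi s a * P s a s' = \sum_s f s.
Proof.
move=> pol; rewrite exchange_big; apply: eq_bigr => s _ /=.
rewrite exchange_big /=; case: (pol s) => _ pi1.
rewrite -[RHS]mulr1 -pi1 mulr_sumr; apply: eq_bigr => a _.
by rewrite -mulr_sumr; case: kP => _ ->; rewrite mulr1.
Qed.

Definition is_flow (pi : 'M[R]_(n, m)) (d : 'I_n -> R) : Prop :=
  forall s', d s' = rho s' + gamma * \sum_s \sum_a d s * pi s a * P s a s'.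

Definition state_occ (pi : 'M[R]_(n, m)) (s : 'I_n) : R :=
  disc_sum gamma (fun t => state_dist P rho pi t s).

Hypothesis rho_distr : is_distr rho.
Hypothesis gamma01 : 0 <= gamma < 1.

Lemma one_sub_gamma_gt0 : 0 < 1 - gamma.
Proof. by rewrite subr_gt0; case/andP: gamma01. Qed.

Variable pi : 'M[R]_(n, m).
Hypothesis pol : is_policy pi.

Lemma state_dist_ge0 t s : 0 <= state_dist P rho pi t s.
Proof.
elim: t s => [|t IHt] s' /=; first by case: rho_distr.
apply: sumr_ge0 => s _; apply: sumr_ge0 => a _.
by rewrite !mulr_ge0 //; [case: (pol s) | case: kP].
Qed.

Lemma sum_state_dist t : \sum_s state_dist P rho pi t s = 1.
Proof.
elim: t => [|t IHt] /=; first by case: rho_distr.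
by rewrite sum_kernel_policy.
Qed.

Lemma state_dist_le1 t s : state_dist P rho pi t s <= 1.
Proof.
rewrite -(sum_state_dist t) (bigD1 s) //= lerDl.
by apply: sumr_ge0 => *; exact: state_dist_ge0.
Qed.

Lemma state_dist_bounds t s : 0 <= state_dist P rho pi t s <= 1.
Proof. by rewrite state_dist_ge0 state_dist_le1. Qed.

Lemma is_cvg_state_occ s :
  cvgn (series (fun t => gamma ^+ t * state_dist P rho pi t s)).
Proof. by apply: is_cvg_disc_sum gamma01 _ => t; exact: state_dist_bounds. Qed.

Lemma state_occ_bounds s : 0 <= state_occ pi s <= 1 / (1 - gamma).
Proof. by apply: disc_sum_bounds gamma01 _ => t; exact: state_dist_bounds. Qed.

Lemma state_occ_flow : is_flow pi (state_occ pi).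
Proof.
move=> s'; rewrite /state_occ (@disc_sum_rec _ gamma _ _
  (fun s => \sum_a pi s a * P s a s') (fun s t => state_dist P rho pi t s)).
- congr (_ + gamma * _); apply: eq_bigr => s _.
  by rewrite mulr_suml; apply: eq_bigr => a _; ring.
- exact: is_cvg_state_occ.
- move=> t /=; apply: eq_bigr => s _.
  by rewrite mulr_suml; apply: eq_bigr => a _; ring.
Qed.

Lemma occE s a : occ P gamma rho pi s a = state_occ pi s * pi s a.
Proof.
rewrite mxE; apply: cvg_lim => //.
have -> : series (fun t => gamma ^+ t * (state_dist P rho pi t s * pi s a)) =
    (fun N => series (fun t => gamma ^+ t * state_dist P rho pi t s) N * pi s a).
  by apply: funext => N; rewrite !seriesEord mulr_suml; apply: eq_bigr => t _; ring.
by apply: cvgMr_tmp; exact: is_cvg_state_occ.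
Qed.

Lemma sum_occ_row s : \sum_a occ P gamma rho pi s a = state_occ pi s.
Proof.
under eq_bigr do rewrite occE.
by rewrite -mulr_sumr; case: (pol s) => _ ->; rewrite mulr1.
Qed.

Lemma sum_flow (d : 'I_n -> R) : is_flow pi d -> \sum_s d s = 1 / (1 - gamma).
Proof.
move=> fl; have g1 := one_sub_gamma_gt0.
have E : \sum_s d s = 1 + gamma * \sum_s d s.
  rewrite [LHS](eq_bigr _ (fun s _ => fl s)) big_split /= -mulr_sumr.
  by case: rho_distr => _ ->; rewrite sum_kernel_policy.
apply: (mulfI (lt0r_neq0 g1)); rewrite mulrBl mul1r {1}E; field.
by rewrite lt0r_neq0.
Qed.

Lemma sum_state_occ : \sum_s state_occ pi s = 1 / (1 - gamma).
Proof. exact/sum_flow/state_occ_flow. Qed.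

Lemma sum_state_occ_sq_le : \sum_s state_occ pi s ^+ 2 <= (1 / (1 - gamma)) ^+ 2.
Proof.
rewrite expr2 -{2}sum_state_occ mulr_sumr; apply: ler_sum => s _.
have /andP[d0 d1] := state_occ_bounds s.
by rewrite expr2 mulrC; apply: ler_wpM2r.
Qed.

Lemma rho_le_state_occ s : rho s <= state_occ pi s.
Proof.
rewrite state_occ_flow lerDl mulr_ge0 //; first by case/andP: gamma01.
apply: sumr_ge0 => s0 _; apply: sumr_ge0 => a _; rewrite !mulr_ge0 //.
- by case/andP: (state_occ_bounds s0).
- by case: (pol s0).
- by case: kP.
Qed.

Lemma flow_unique (d1 d2 : 'I_n -> R) : is_flow pi d1 -> is_flow pi d2 -> d1 = d2.
Proof.
move=> fl1 fl2; case/andP: gamma01 => g0 g1.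
pose e s := `|d1 s - d2 s|.
have e_contr : \sum_s e s <= gamma * \sum_s e s.
  rewrite -{2}(sum_kernel_policy e pol) mulr_sumr; apply: ler_sum => s' _.
  rewrite /e /= [d1 s']fl1 [d2 s']fl2 opprD addrACA subrr add0r -mulrBr -!sumrB.
  rewrite normrM ger0_norm //.
  apply: ler_wpM2l => //; apply: (le_trans (ler_norm_sum _ _ _)).
  apply: ler_sum => s _; rewrite -sumrB; apply: (le_trans (ler_norm_sum _ _ _)).
  apply: ler_sum => a _; rewrite -!mulrBl !normrM.
  rewrite (ger0_norm (_ : 0 <= pi s a)); last by case: (pol s).
  by rewrite (ger0_norm (_ : 0 <= P s a s')) //; case: kP.
have e_sum0 : \sum_s e s = 0.
  apply/eqP; rewrite eq_le sumr_ge0 ?andbT => [|s _]; last exact: normr_ge0.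
  have : (1 - gamma) * \sum_s e s <= 0 by rewrite mulrBl mul1r subr_le0.
  by rewrite pmulr_rle0 // one_sub_gamma_gt0.
apply: funext => s; apply/eqP; rewrite -subr_eq0 -normr_eq0 -/(e s) eq_le normr_ge0 andbT.
rewrite -e_sum0 (bigD1 s) //= lerDl; apply: sumr_ge0 => *; exact: normr_ge0.
Qed.

End state_occupancy.

Lemma sum_indicatorl (R : pzRingType) (I : finType) (i0 : I) (f : I -> R) :
  \sum_i (i == i0)%:R * f i = f i0.
Proof.
rewrite (bigD1 i0) //= eqxx mul1r big1 ?addr0 // => i /negbTE ->.
by rewrite mul0r.
Qed.

Lemma sum_indicatorr (R : pzRingType) (I : finType) (i0 : I) (f : I -> R) :
  \sum_i f i * (i0 == i)%:R = f i0.
Proof.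
rewrite (bigD1 i0) //= eqxx mulr1 big1 ?addr0 // => i; rewrite eq_sym => /negbTE ->.
by rewrite mulr0.
Qed.

Section action_value.
Variables (R : realType) (n m : nat) (P : 'I_n -> 'I_m -> 'I_n -> R) (gamma : R).
Hypothesis kP : is_kernel P.
Hypothesis gamma01 : 0 <= gamma < 1.

Lemma sa_distS_first (pi : 'M[R]_(n, m)) t : forall s a s'' a'',
  sa_dist P pi s a t.+1 s'' a'' =
  \sum_s1 \sum_a1 P s a s1 * pi s1 a1 * sa_dist P pi s1 a1 t s'' a''.
Proof.
elim: t => [|t IHt] s a s'' a''.
  rewrite /=; transitivity (P s a s'' * pi s'' a'').
    under eq_bigr do under eq_bigr do rewrite -mulnb natrM -!mulrA.
    by under eq_bigr do rewrite -mulr_sumr sum_indicatorl; rewrite sum_indicatorl.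
  under eq_bigr do under eq_bigr do rewrite -mulnb natrM mulrA.
  by under eq_bigr do rewrite sum_indicatorr; rewrite sum_indicatorr.
transitivity (\sum_s' \sum_a' sa_dist P pi s a t.+1 s' a' * P s' a' s'' * pi s'' a'');
  first by [].
under eq_bigr do under eq_bigr do rewrite IHt -mulrA mulr_suml.
under eq_bigr do under eq_bigr do under eq_bigr do rewrite mulr_suml.
under eq_bigr do rewrite exchange_big /=.
under eq_bigr do under eq_bigr do rewrite exchange_big /=.
rewrite exchange_big /=; under eq_bigr do rewrite exchange_big /=.
apply: eq_bigr => s1 _; apply: eq_bigr => a1 _.
rewrite mulr_sumr; apply: eq_bigr => s' _.
rewrite mulr_sumr; apply: eq_bigr => a' _; ring.
Qed.

Definition exp_reward (pi u : 'M[R]_(n, m)) t s a : R :=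
  \sum_s' \sum_a' sa_dist P pi s a t s' a' * u s' a'.

Lemma exp_reward0 pi u s a : exp_reward pi u 0 s a = u s a.
Proof.
rewrite /exp_reward /=; under eq_bigr do under eq_bigr do rewrite -mulnb natrM -mulrA.
by under eq_bigr do rewrite -mulr_sumr sum_indicatorl; rewrite sum_indicatorl.
Qed.

Lemma exp_rewardS pi u t s a : exp_reward pi u t.+1 s a =
  \sum_s1 \sum_a1 P s a s1 * pi s1 a1 * exp_reward pi u t s1 a1.
Proof.
rewrite /exp_reward; under eq_bigr do under eq_bigr do rewrite sa_distS_first mulr_suml.
under eq_bigr do under eq_bigr do under eq_bigr do rewrite mulr_suml.
under eq_bigr do rewrite exchange_big /=.
under eq_bigr do under eq_bigr do rewrite exchange_big /=.
rewrite exchange_big /=; under eq_bigr do rewrite exchange_big /=.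
apply: eq_bigr => s1 _; apply: eq_bigr => a1 _.
rewrite mulr_sumr; apply: eq_bigr => s' _.
rewrite mulr_sumr; apply: eq_bigr => a' _; ring.
Qed.

Definition is_bellman (pi u : 'M[R]_(n, m)) (Q : 'I_n -> 'I_m -> R) : Prop :=
  forall s a, Q s a = u s a + gamma * \sum_s1 \sum_a1 P s a s1 * pi s1 a1 * Q s1 a1.

Variables (pi u : 'M[R]_(n, m)) (B : R).
Hypothesis pol : is_policy pi.
Hypothesis u0B : forall s a, 0 <= u s a <= B.

Lemma exp_reward_bounds t s a : 0 <= exp_reward pi u t s a <= B.
Proof.
elim: t s a => [|t IHt] s a; first by rewrite exp_reward0.
have w0 s1 a1 : 0 <= P s a s1 * pi s1 a1 by rewrite mulr_ge0 //; [case: kP | case: (pol s1)].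
rewrite exp_rewardS; apply/andP; split.
  apply: sumr_ge0 => s1 _; apply: sumr_ge0 => a1 _.
  by rewrite mulr_ge0 //; case/andP: (IHt s1 a1).
apply: (@le_trans _ _ (\sum_s1 \sum_a1 P s a s1 * pi s1 a1 * B)).
  apply: ler_sum => s1 _; apply: ler_sum => a1 _.
  by apply: ler_wpM2l => //; case/andP: (IHt s1 a1).
have -> : \sum_s1 \sum_a1 P s a s1 * pi s1 a1 * B = \sum_s1 P s a s1 * B.
  apply: eq_bigr => s1 _; case: (pol s1) => _ pi1.
  by rewrite -mulr_suml -mulr_sumr pi1 mulr1.
by rewrite -mulr_suml; case: kP => _ ->; rewrite mul1r.
Qed.

Lemma QfunE s a : Qfun P gamma pi u s a = disc_sum gamma (fun t => exp_reward pi u t s a).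
Proof. by []. Qed.

Lemma Qfun_bounds s a : 0 <= Qfun P gamma pi u s a <= B / (1 - gamma).
Proof. by apply: disc_sum_bounds gamma01 _ => t; exact: exp_reward_bounds. Qed.

Lemma Qfun_bellman : is_bellman pi u (Qfun P gamma pi u).
Proof.
move=> s a; rewrite QfunE (@disc_sum_rec _ gamma _ _
  (fun p : 'I_n * 'I_m => P s a p.1 * pi p.1 p.2) (fun p t => exp_reward pi u t p.1 p.2)).
- by rewrite exp_reward0 pair_bigA.
- by move=> p; apply: is_cvg_disc_sum gamma01 _ => t; exact: exp_reward_bounds.
- by move=> t; rewrite exp_rewardS pair_bigA.
Qed.

End action_value.

Lemma mxBE (R : zmodType) (n m : nat) (A B : 'M[R]_(n, m)) i j :
  (A - B) i j = A i j - B i j.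
Proof. by rewrite !mxE. Qed.

Lemma mxDE (R : zmodType) (n m : nat) (A B : 'M[R]_(n, m)) i j :
  (A + B) i j = A i j + B i j.
Proof. by rewrite !mxE. Qed.

Lemma mxZE (R : pzRingType) (n m : nat) (c : R) (A : 'M[R]_(n, m)) i j :
  (c *: A) i j = c * A i j.
Proof. by rewrite !mxE. Qed.

Lemma perf_diff_flow (R : realType) (n m : nat) (P : 'I_n -> 'I_m -> 'I_n -> R)
    (rho : 'I_n -> R) (gamma : R) (pi' pi u : 'M[R]_(n, m)) (d' : 'I_n -> R)
    (Q : 'I_n -> 'I_m -> R) :
  is_flow P rho gamma pi' d' -> is_bellman P gamma pi u Q ->
  \sum_s \sum_a u s a * (d' s * pi' s a) =
  \sum_s d' s * \sum_a (pi' s a - pi s a) * Q s a +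
  \sum_s rho s * \sum_a pi s a * Q s a.
Proof.
move=> fl bell; pose V s1 := \sum_a1 pi s1 a1 * Q s1 a1.
have uE s a : u s a = Q s a - gamma * \sum_s1 P s a s1 * V s1.
  have -> : \sum_s1 P s a s1 * V s1 = \sum_s1 \sum_a1 P s a s1 * pi s1 a1 * Q s1 a1.
    by apply: eq_bigr => s1 _; rewrite mulr_sumr; apply: eq_bigr => a1 _; rewrite mulrA.
  by rewrite [Q s a]bell addrK.
have flowV : \sum_s \sum_a (gamma * \sum_s1 P s a s1 * V s1) * (d' s * pi' s a) =
    \sum_s1 V s1 * (d' s1 - rho s1).
  transitivity (\sum_s \sum_a \sum_s1 V s1 * (gamma * (d' s * pi' s a * P s a s1))).
    apply: eq_bigr => s _; apply: eq_bigr => a _.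
    by rewrite mulr_sumr mulr_suml; apply: eq_bigr => s1 _; ring.
  under eq_bigr do rewrite exchange_big /=.
  rewrite exchange_big /=; apply: eq_bigr => s1 _.
  rewrite [d' s1]fl addrAC subrr add0r !mulr_sumr.
  by apply: eq_bigr => s _; rewrite !mulr_sumr; apply: eq_bigr => a _; ring.
under eq_bigr do under eq_bigr do rewrite uE mulrBl.
under eq_bigr do rewrite sumrB.
rewrite sumrB flowV -sumrB -big_split /=; apply: eq_bigr => s _.
under [X in _ = _ * X + _]eq_bigr do rewrite mulrBl.
rewrite sumrB /V.
have -> : \sum_a Q s a * (d' s * pi' s a) = d' s * \sum_a pi' s a * Q s a.
  by rewrite mulr_sumr; apply: eq_bigr => a _; ring.
ring.
Qed.

Section frobenius.
Variables (R : realType) (n m : nat).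

Lemma frob_inner_delta (X : 'M[R]_(n, m)) s a : frob_inner (delta_mx s a) X = X s a.
Proof.
rewrite /frob_inner; under eq_bigr do under eq_bigr do rewrite mxE -mulnb natrM -mulrA.
by under eq_bigr do rewrite -mulr_sumr sum_indicatorl; rewrite sum_indicatorl.
Qed.

Lemma frob_inner_row_indicator (X : 'M[R]_(n, m)) s :
  frob_inner (\matrix_(s', a) (s' == s)%:R) X = \sum_a X s a.
Proof.
rewrite /frob_inner; under eq_bigr do under eq_bigr do rewrite mxE.
by under eq_bigr do rewrite -mulr_sumr; rewrite sum_indicatorl.
Qed.

Lemma mx_norm_le (X : 'M[R]_(n, m)) (c : R) :
  0 <= c -> (forall s a, `|X s a| <= c) -> `|X| <= c.
Proof.
move=> c0 Xc; rewrite [`|X|]/Num.norm /= mx_normrE.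
by apply: bigmax_le => // -[s a] _; exact: Xc.
Qed.

End frobenius.

Section performance_difference.
Variables (R : realType) (n m : nat) (P : 'I_n -> 'I_m -> 'I_n -> R).
Variables (rho : 'I_n -> R) (gamma : R).
Hypothesis kP : is_kernel P.
Hypothesis rho_distr : is_distr rho.
Hypothesis gamma01 : 0 <= gamma < 1.

Local Notation state_occ := (state_occ P rho gamma).
Local Notation occ := (occ P gamma rho).

Variables (pi' pi : 'M[R]_(n, m)).
Hypothesis pol' : is_policy pi'.
Hypothesis pol : is_policy pi.

Lemma perf_diff (u : 'M[R]_(n, m)) (B : R) : (forall s a, 0 <= u s a <= B) ->
  frob_inner u (occ pi' - occ pi) =
  \sum_s state_occ pi' s * \sum_a (pi' s a - pi s a) * Qfun P gamma pi u s a.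
Proof.
move=> u0B; have bell := Qfun_bellman kP gamma01 pol u0B.
have pdf p : is_policy p -> \sum_s \sum_a u s a * occ p s a =
    \sum_s state_occ p s * \sum_a (p s a - pi s a) * Qfun P gamma pi u s a +
    \sum_s rho s * \sum_a pi s a * Qfun P gamma pi u s a.
  move=> polp; under eq_bigr do under eq_bigr do rewrite occE //.
  exact/perf_diff_flow/bell/state_occ_flow.
transitivity (\sum_s \sum_a u s a * occ pi' s a - \sum_s \sum_a u s a * occ pi s a).
  rewrite -sumrB; apply: eq_bigr => s _; rewrite -sumrB; apply: eq_bigr => a _.
  by rewrite mxBE mulrBr.
rewrite (pdf _ pol') (pdf _ pol) [in X in _ - X]big1 ?add0r ?addrK // => s _.
by rewrite big1 ?mulr0 // => a _; rewrite subrr mul0r.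
Qed.

Lemma frob_occ_sub_le (u : 'M[R]_(n, m)) (B : R) :
  (forall s a, 0 <= u s a <= B) -> 0 <= B ->
  `|frob_inner u (occ pi' - occ pi)| <=
    B / (1 - gamma) ^+ 2 * \sum_s \sum_a `|pi' s a - pi s a|.
Proof.
move=> u0B B0; have g1 := one_sub_gamma_gt0 gamma01.
have QB : 0 <= B / (1 - gamma) := divr_ge0 B0 (ltW g1).
rewrite (perf_diff u0B); apply: le_trans (ler_norm_sum _ _ _) _.
rewrite mulr_sumr; apply: ler_sum => s _.
have /andP[d0 d1] := state_occ_bounds kP rho_distr gamma01 pol' s.
have inner : `|\sum_a (pi' s a - pi s a) * Qfun P gamma pi u s a| <=
    B / (1 - gamma) * \sum_a `|pi' s a - pi s a|.
  apply: le_trans (ler_norm_sum _ _ _) _; rewrite mulr_sumr; apply: ler_sum => a _.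
  have /andP[Q0 Q1] := Qfun_bounds kP gamma01 pol u0B s a.
  by rewrite normrM mulrC ger0_norm //; apply: ler_wpM2r.
rewrite normrM ger0_norm //; apply: le_trans (ler_wpM2l d0 inner) _.
rewrite mulrA; apply: ler_wpM2r; first by apply: sumr_ge0 => *; exact: normr_ge0.
rewrite [leRHS](_ : _ = 1 / (1 - gamma) * (B / (1 - gamma))); first exact: ler_wpM2r.
by field; rewrite lt0r_neq0.
Qed.

Lemma state_occ_sub_le s :
  `|state_occ pi' s - state_occ pi s| <=
    1 / (1 - gamma) ^+ 2 * \sum_s \sum_a `|pi' s a - pi s a|.
Proof.
have u01 s1 a1 : 0 <= (\matrix_(s2, a2) (s2 == s)%:R : 'M[R]_(n, m)) s1 a1 <= 1.
  by rewrite mxE ler0n lern1 leq_b1.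
suff -> : state_occ pi' s - state_occ pi s =
    frob_inner (\matrix_(s', a) (s' == s)%:R) (occ pi' - occ pi).
  exact: frob_occ_sub_le u01 ler01.
rewrite frob_inner_row_indicator -(sum_occ_row kP rho_distr gamma01 pol').
by rewrite -(sum_occ_row kP rho_distr gamma01 pol) -sumrB; under [RHS]eq_bigr do rewrite mxBE.
Qed.

Lemma norm_occ_sub_le :
  `|occ pi' - occ pi| <= 1 / (1 - gamma) ^+ 2 * \sum_s \sum_a `|pi' s a - pi s a|.
Proof.
have g1 := one_sub_gamma_gt0 gamma01.
apply: mx_norm_le => [|s a].
  apply: mulr_ge0; first by rewrite divr_ge0 ?exprn_ge0 ?(ltW g1).
  by apply: sumr_ge0 => s _; apply: sumr_ge0 => a _; exact: normr_ge0.
have u01 s1 a1 : 0 <= (delta_mx s a : 'M[R]_(n, m)) s1 a1 <= 1.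
  by rewrite mxE ler0n lern1 leq_b1.
by rewrite -frob_inner_delta; exact: frob_occ_sub_le u01 ler01.
Qed.

End performance_difference.

Section mixture.
Variables (R : realType) (n m : nat) (P : 'I_n -> 'I_m -> 'I_n -> R).
Variables (rho : 'I_n -> R) (gamma : R).

Local Notation state_occ := (state_occ P rho gamma).

Definition mix_weight (al : R) (pi1 pi2 : 'M[R]_(n, m)) (s : 'I_n) : R :=
  al * state_occ pi1 s + (1 - al) * state_occ pi2 s.

Definition mix_policy (al : R) (pi1 pi2 : 'M[R]_(n, m)) : 'M[R]_(n, m) :=
  \matrix_(s, a) ((al * state_occ pi1 s * pi1 s a + (1 - al) * state_occ pi2 s * pi2 s a)
                  / mix_weight al pi1 pi2 s).

Hypothesis kP : is_kernel P.
Hypothesis rho_distr : is_distr rho.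
Hypothesis gamma01 : 0 <= gamma < 1.
Hypothesis rho_gt0 : forall s, 0 < rho s.

Variables (pi1 pi2 : 'M[R]_(n, m)) (al : R).
Hypothesis pol1 : is_policy pi1.
Hypothesis pol2 : is_policy pi2.
Hypothesis al01 : 0 <= al <= 1.

Local Notation w := (mix_weight al pi1 pi2).
Local Notation pim := (mix_policy al pi1 pi2).

Lemma mix_weight_gt0 s : 0 < w s.
Proof.
case/andP: al01 => al0 al1; apply: lt_le_trans (rho_gt0 s) _.
rewrite -[rho s]mul1r -(subrK al 1) mulrDl addrC /mix_weight.
by apply: lerD; apply: ler_wpM2l; rewrite ?subr_ge0 //; exact: rho_le_state_occ.
Qed.

Lemma mix_weight_mul s a :
  w s * pim s a = al * state_occ pi1 s * pi1 s a + (1 - al) * state_occ pi2 s * pi2 s a.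
Proof. by rewrite mxE mulrC divfK // lt0r_neq0 // mix_weight_gt0. Qed.

Lemma is_policy_mix : is_policy pim.
Proof.
case/andP: al01 => al0 al1 s; have w0 := mix_weight_gt0 s; split.
  have [/andP[d1 _] /andP[d2 _]] := (state_occ_bounds kP rho_distr gamma01 pol1 s,
                                    state_occ_bounds kP rho_distr gamma01 pol2 s).
  move=> a; rewrite mxE; apply: divr_ge0; last exact: ltW.
  by apply: addr_ge0; rewrite !mulr_ge0 ?subr_ge0 //; [case: (pol1 s) | case: (pol2 s)].
apply: (mulfI (lt0r_neq0 w0)); rewrite mulr1 mulr_sumr.
under eq_bigr do rewrite mix_weight_mul.
rewrite big_split /= -!mulr_sumr.
by case: (pol1 s) => _ ->; case: (pol2 s) => _ ->; rewrite !mulr1.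
Qed.

Lemma mix_weight_flow : is_flow P rho gamma pim w.
Proof.
move=> s'; under eq_bigr do under eq_bigr do rewrite mix_weight_mul.
have -> : \sum_s \sum_a (al * state_occ pi1 s * pi1 s a +
      (1 - al) * state_occ pi2 s * pi2 s a) * P s a s' =
    al * \sum_s \sum_a state_occ pi1 s * pi1 s a * P s a s' +
    (1 - al) * \sum_s \sum_a state_occ pi2 s * pi2 s a * P s a s'.
  rewrite !mulr_sumr -big_split; apply: eq_bigr => s _ /=.
  by rewrite !mulr_sumr -big_split; apply: eq_bigr => a _ /=; ring.
rewrite /mix_weight [state_occ pi1 s']state_occ_flow //.
by rewrite [state_occ pi2 s']state_occ_flow //; ring.
Qed.

Lemma state_occ_mix : state_occ pim = w.
Proof.
apply: (flow_unique kP gamma01 is_policy_mix) mix_weight_flow.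
exact: state_occ_flow is_policy_mix.
Qed.

Lemma occ_mix :
  occ P gamma rho pim = al *: occ P gamma rho pi1 + (1 - al) *: occ P gamma rho pi2.
Proof.
apply/matrixP => s a; rewrite mxDE !mxZE !occE //; last exact: is_policy_mix.
by rewrite state_occ_mix mix_weight_mul !mulrA.
Qed.

Lemma mix_policy_subr s a :
  pim s a - pi2 s a = al * state_occ pi1 s / w s * (pi1 s a - pi2 s a).
Proof.
have w0 := lt0r_neq0 (mix_weight_gt0 s).
by apply: (mulfI w0); rewrite mulrBr mix_weight_mul /mix_weight; field.
Qed.

End mixture.

Section right_slope.
Variable R : realType.

Definition right_slope (f : R -> R) (A : R) : Prop :=
  forall eps, 0 < eps -> exists2 del, 0 < del &
    forall h, 0 < h -> h < del -> `|f h - f 0 - h * A| <= h * eps.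

Lemma right_slope_unique (f : R -> R) (A B : R) :
  right_slope f A -> right_slope f B -> A = B.
Proof.
move=> fA fB; apply/eqP; rewrite -subr_eq0 -normr_eq0 eq_le normr_ge0 andbT.
apply/ler_addgt0Pr => eps eps0; rewrite add0r.
have eps2 : 0 < eps / 2 by rewrite divr_gt0.
have [dA dA0 hA] := fA _ eps2; have [dB dB0 hB] := fB _ eps2.
pose h := Num.min dA dB / 2.
have h0 : 0 < h by rewrite divr_gt0 // lt_min dA0 dB0.
have [hdA hdB] : h < dA /\ h < dB.
  have h_lt : h < Num.min dA dB by rewrite ltr_pdivrMr // ltr_pMr ?ltr1n // lt_min dA0.
  by move: h_lt; rewrite lt_min => /andP[].
rewrite -(ler_pM2l h0) -[h in h * `|_|](ger0_norm (ltW h0)) -normrM.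
have -> : h * (A - B) = (f h - f 0 - h * B) - (f h - f 0 - h * A) by ring.
apply: le_trans (ler_normB _ _) _.
by rewrite (splitr eps) mulrDr lerD ?hA ?hB.
Qed.

Lemma right_slope_of_bound (f : R -> R) (A c1 c2 : R) : 0 <= c1 -> 0 <= c2 ->
  (forall e, 0 < e -> exists2 del, 0 < del & forall h, 0 < h -> h < del ->
     `|f h - f 0 - h * A| <= h * (e * c1 + h * c2)) ->
  right_slope f A.
Proof.
move=> c10 c20 fb eps eps0.
have small c : 0 <= c -> eps / (2 * (c + 1)) * c <= eps / 2.
  move=> c0; have c1_gt0 : 0 < c + 1 by rewrite ltr_wpDl.
  rewrite -subr_ge0 (_ : _ - _ = eps / (2 * (c + 1))); last by field; rewrite lt0r_neq0.
  by rewrite divr_ge0 ?mulr_ge0 ?(ltW eps0) ?(ltW c1_gt0).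
have e_gt0 : 0 < eps / (2 * (c1 + 1)) by rewrite divr_gt0 // mulr_gt0 // ltr_wpDl.
have [del del0 hd] := fb _ e_gt0.
exists (Num.min del (eps / (2 * (c2 + 1)))).
  by rewrite lt_min del0 divr_gt0 // mulr_gt0 // ltr_wpDl.
move=> h h0; rewrite lt_min => /andP[hdel heps].
apply: le_trans (hd h h0 hdel) _; rewrite ler_pM2l // [leRHS](splitr eps).
apply: lerD; first exact: small.
apply: le_trans (small _ c20); apply: ler_wpM2r => //; exact: ltW.
Qed.

End right_slope.

Lemma differentiable_remainder (R : realType) (V : normedModType R) (f : V -> R) (x : V) :
  differentiable f x -> forall eps, 0 < eps ->
  exists2 del, 0 < del & forall v, `|v| < del ->
    `|f (x + v) - f x - 'd f x v| <= eps * `|v|.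
Proof.
move=> df eps eps0; have /eqaddoP fo := diff_locally df.
have /nbhs_norm0P [del del0 Hdel] := fo eps eps0.
exists del => // v vdel; have := Hdel v vdel.
by rewrite !fctE /= [v + x]addrC opprD addrA.
Qed.

Section frobenius_grad.
Variables (R : realType) (n m : nat).

Lemma diff_grad (f : 'M[R]_(n, m) -> R) (mu : 'M[R]_(n, m)) :
  differentiable f mu -> forall v, 'd f mu v = frob_inner (grad f mu) v.
Proof.
move=> df v; rewrite /frob_inner /grad {1}(matrix_sum_delta v) linear_sum.
apply: eq_bigr => s _; rewrite linear_sum; apply: eq_bigr => a _.
by rewrite linearZ /= mxE deriveE // mulrC.
Qed.

Lemma frob_innerZ (X Y : 'M[R]_(n, m)) (c : R) : frob_inner X (c *: Y) = c * frob_inner X Y.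
Proof.
rewrite /frob_inner mulr_sumr; apply: eq_bigr => s _; rewrite mulr_sumr.
by apply: eq_bigr => a _; rewrite mxZE mulrCA.
Qed.

Lemma sqnorm2Z (X : 'M[R]_(n, m)) (c : R) : sqnorm2 (c *: X) = c ^+ 2 * sqnorm2 X.
Proof.
rewrite /sqnorm2 /frob_inner mulr_sumr; apply: eq_bigr => s _; rewrite mulr_sumr.
by apply: eq_bigr => a _; rewrite mxZE; ring.
Qed.

Lemma sqnorm2E (X : 'M[R]_(n, m)) : sqnorm2 X = \sum_s \sum_a X s a ^+ 2.
Proof. by apply: eq_bigr => s _; apply: eq_bigr => a _; rewrite expr2. Qed.

Lemma sqnorm2_ge0 (X : 'M[R]_(n, m)) : 0 <= sqnorm2 X.
Proof. by rewrite sqnorm2E; apply: sumr_ge0 => s _; apply: sumr_ge0 => a _; exact: sqr_ge0. Qed.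

Lemma is_policy_segment (p q : 'M[R]_(n, m)) (h : R) :
  is_policy p -> is_policy q -> 0 <= h <= 1 -> is_policy (p + h *: (q - p)).
Proof.
move=> polp polq /andP[h0 h1] s; split.
  move=> a; rewrite mxDE mxZE mxBE.
  rewrite (_ : p s a + h * (q s a - p s a) = (1 - h) * p s a + h * q s a); last by ring.
  by rewrite addr_ge0 // mulr_ge0 ?subr_ge0 //; [case: (polp s) | case: (polq s)].
under eq_bigr do rewrite mxDE mxZE mxBE.
rewrite big_split /= -mulr_sumr sumrB.
by case: (polp s) => _ ->; case: (polq s) => _ ->; rewrite subrr mulr0 addr0.
Qed.

End frobenius_grad.

Section policy_gradient.
Variables (R : realType) (n m : nat) (P : 'I_n -> 'I_m -> 'I_n -> R).
Variables (rho : 'I_n -> R) (gamma : R) (F : 'M[R]_(n, m) -> R) (U L : R).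
Hypothesis kP : is_kernel P.
Hypothesis rho_distr : is_distr rho.
Hypothesis gamma01 : 0 <= gamma < 1.
Hypothesis F_diff : forall mu, occ_set P gamma rho mu -> differentiable F mu.
Hypothesis Gamma_bounds : forall p, is_policy p -> forall s a,
  0 <= pseudo_reward P F gamma rho p s a <= U.
Hypothesis L_ge0 : 0 <= L.
Hypothesis G_smooth : forall p p', is_policy p -> is_policy p' ->
  `|Gobj P F gamma rho p - Gobj P F gamma rho p'
    - frob_inner (grad (Gobj P F gamma rho) p') (p - p')| <= L / 2 * sqnorm2 (p - p').

Local Notation G := (Gobj P F gamma rho).
Local Notation state_occ := (state_occ P rho gamma).
Local Notation occ := (occ P gamma rho).

Variables (pi pb : 'M[R]_(n, m)).
Hypothesis pol : is_policy pi.
Hypothesis polb : is_policy pb.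

Local Notation e := (pb - pi).
Local Notation seg h := (pi + h *: (pb - pi)).
Local Notation Q := (Qfun P gamma pi (pseudo_reward P F gamma rho pi)).
Local Notation X s := (\sum_a e s a * Q s a).

Lemma segment_sub h : seg h - pi = h *: e.
Proof. by rewrite addrC addKr. Qed.

Lemma segment_subr h s a : seg h s a - pi s a = h * e s a.
Proof. by rewrite -mxBE segment_sub mxZE. Qed.

Lemma sum_abs_segment h : 0 <= h ->
  \sum_s \sum_a `|seg h s a - pi s a| = h * \sum_s \sum_a `|e s a|.
Proof.
move=> h0; rewrite mulr_sumr; apply: eq_bigr => s _; rewrite mulr_sumr.
by apply: eq_bigr => a _; rewrite segment_subr normrM ger0_norm.
Qed.

Lemma occ_segment_inner h : 0 <= h <= 1 ->
  frob_inner (pseudo_reward P F gamma rho pi) (occ (seg h) - occ pi) =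
  h * \sum_s state_occ (seg h) s * X s.
Proof.
move=> h01; have polh := is_policy_segment pol polb h01.
rewrite (perf_diff kP rho_distr gamma01 polh pol (Gamma_bounds pol)) mulr_sumr.
apply: eq_bigr => s _; rewrite [RHS]mulrCA [h * _]mulr_sumr; congr (_ * _).
by apply: eq_bigr => a _; rewrite segment_subr mulrA.
Qed.

Definition seg_lip : R := 1 / (1 - gamma) ^+ 2 * \sum_s \sum_a `|e s a|.

Lemma seg_lip_ge0 : 0 <= seg_lip.
Proof.
have g1 := one_sub_gamma_gt0 gamma01.
apply: mulr_ge0; first by rewrite divr_ge0 ?exprn_ge0 ?(ltW g1).
by apply: sumr_ge0 => s _; apply: sumr_ge0 => a _; exact: normr_ge0.
Qed.

Lemma norm_occ_segment_le h : 0 <= h <= 1 -> `|occ (seg h) - occ pi| <= h * seg_lip.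
Proof.
move=> h01; have polh := is_policy_segment pol polb h01.
apply: le_trans (norm_occ_sub_le kP rho_distr gamma01 polh pol) _.
by case/andP: h01 => h0 _; rewrite sum_abs_segment // mulrCA.
Qed.

Lemma state_occ_segment_le h : 0 <= h <= 1 ->
  `|\sum_s state_occ (seg h) s * X s - \sum_s state_occ pi s * X s| <=
    h * (seg_lip * \sum_s `|X s|).
Proof.
move=> h01; have polh := is_policy_segment pol polb h01.
rewrite -sumrB mulrA mulr_sumr; apply: le_trans (ler_norm_sum _ _ _) _.
apply: ler_sum => s _; rewrite -mulrBl normrM ler_wpM2r //.
apply: le_trans (state_occ_sub_le kP rho_distr gamma01 polh pol s) _.
by case/andP: h01 => h0 _; rewrite sum_abs_segment // mulrCA.
Qed.

Lemma right_slope_grad :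
  right_slope (fun h => G (seg h)) (frob_inner (grad G pi) e).
Proof.
have c2 : 0 <= L / 2 * sqnorm2 e by rewrite mulr_ge0 ?divr_ge0 ?sqnorm2_ge0.
apply: (right_slope_of_bound (lexx 0) c2) => eps _.
exists 1 => // h h0 h1; have h01 : 0 <= h <= 1 by rewrite (ltW h0) (ltW h1).
have := G_smooth (is_policy_segment pol polb h01) pol.
rewrite scale0r addr0 segment_sub frob_innerZ sqnorm2Z mulr0 add0r => /le_trans; apply.
suff -> : L / 2 * (h ^+ 2 * sqnorm2 e) = h * (h * (L / 2 * sqnorm2 e)) by [].
by rewrite expr2; ring.
Qed.

Lemma right_slope_Qfun :
  right_slope (fun h => G (seg h)) (\sum_s state_occ pi s * X s).
Proof.
have C0 := seg_lip_ge0.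
have X0 : 0 <= \sum_s `|X s| by apply: sumr_ge0 => s _; exact: normr_ge0.
apply: (right_slope_of_bound C0 (mulr_ge0 C0 X0)) => eps eps0.
have occ_pi : occ_set P gamma rho (occ pi) by exists pi.
have [del del0 rem] := differentiable_remainder (F_diff occ_pi) eps0.
exists (Num.min 1 (del / (seg_lip + 1))).
  by rewrite lt_min ltr01 divr_gt0 // ltr_wpDl.
move=> h h0; rewrite lt_min => /andP[h1 hdel].
have h01 : 0 <= h <= 1 by rewrite (ltW h0) (ltW h1).
have v_le := norm_occ_segment_le h01.
have v_del : `|occ (seg h) - occ pi| < del.
  rewrite ltr_pdivlMr ?ltr_wpDl // in hdel; apply: le_lt_trans v_le (le_lt_trans _ hdel).
  by apply: ler_wpM2l; [exact: ltW | rewrite lerDl].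
have := rem _ v_del; rewrite [occ pi + _]addrC subrK (diff_grad (F_diff occ_pi)).
rewrite -/(pseudo_reward P F gamma rho pi) occ_segment_inner // scale0r addr0 => F_rem.
set Y := \sum_s state_occ (seg h) s * X s in F_rem *.
have -> : G (seg h) - G pi - h * \sum_s state_occ pi s * X s =
    (F (occ (seg h)) - F (occ pi) - h * Y) + h * (Y - \sum_s state_occ pi s * X s).
  by rewrite /Gobj; ring.
apply: le_trans (ler_normD _ _) _; rewrite normrM (ger0_norm (ltW h0)) mulrDr.
apply: lerD; last by apply: ler_wpM2l; [exact: ltW | exact: state_occ_segment_le].
apply: le_trans F_rem _; rewrite mulrCA.
by apply: ler_wpM2l; [exact: ltW | exact: v_le].
Qed.

(* [grad G] is the entrywise [derive] of [G]; the smoothness hypothesis alone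
   identifies its pairing with [pb - pi], without assuming [G] differentiable. *)
Theorem policy_gradient :
  frob_inner (grad G pi) (pb - pi) = \sum_s state_occ pi s * X s.
Proof. exact: right_slope_unique right_slope_grad right_slope_Qfun. Qed.

End policy_gradient.

Section simplex.
Variables (R : realType) (m : nat).

Lemma in_simplex_le1 (p : 'I_m -> R) : in_simplex p -> forall a, p a <= 1.
Proof.
case=> p0 p1 a; rewrite -p1 (bigD1 a) //= lerDl.
by apply: sumr_ge0 => *; exact: p0.
Qed.

Lemma sum_sq_simplex_sub_le (p q : 'I_m -> R) :
  in_simplex p -> in_simplex q -> \sum_a (p a - q a) ^+ 2 <= 2.
Proof.
move=> sp sq; apply: (@le_trans _ _ (\sum_a (p a + q a))).
  apply: ler_sum => a _.
  have p0 := sp.1 a; have q0 := sq.1 a.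
  have p1 := in_simplex_le1 sp a; have q1 := in_simplex_le1 sq a.
  nra.
by rewrite big_split /= sp.2 sq.2.
Qed.

Lemma simplex_proj_prox (x q p Q : 'I_m -> R) (eta D : R) : 0 < eta -> 0 <= D ->
  \sum_a (q a - (x a + eta * Q a)) ^+ 2 <= \sum_a (p a - (x a + eta * Q a)) ^+ 2 ->
  D * \sum_a (p a - x a) * Q a - D / (2 * eta) * \sum_a (p a - x a) ^+ 2 <=
  D * \sum_a (q a - x a) * Q a - D / (2 * eta) * \sum_a (q a - x a) ^+ 2.
Proof.
move=> eta0 D0.
have expand z : \sum_a (z a - (x a + eta * Q a)) ^+ 2 = \sum_a (z a - x a) ^+ 2
    - 2 * eta * \sum_a (z a - x a) * Q a + eta ^+ 2 * \sum_a Q a ^+ 2.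
  by rewrite !mulr_sumr -sumrB -big_split /=; apply: eq_bigr => a _; ring.
rewrite !expand lerD2r.
move: (\sum_a (q a - x a) ^+ 2) (\sum_a (p a - x a) ^+ 2) => Sq Sp.
move: (\sum_a (q a - x a) * Q a) (\sum_a (p a - x a) * Q a) => Bq Bp le_qp.
have c0 : 0 <= D / (2 * eta) by rewrite divr_ge0 // mulr_ge0 ?(ltW eta0).
have := ler_wpM2l c0 le_qp; rewrite -subr_ge0 => H; rewrite -subr_ge0.
suff -> : D * Bq - D / (2 * eta) * Sq - (D * Bp - D / (2 * eta) * Sp) =
   D / (2 * eta) * (Sp - 2 * eta * Bp) - D / (2 * eta) * (Sq - 2 * eta * Bq) by [].
by field; rewrite lt0r_neq0.
Qed.

End simplex.

Section numeric.
Variable R : realType.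

Lemma mix_ratio_bound (x y al r : R) : 0 < r -> r <= x -> r <= y -> 0 <= al <= 1 ->
  (1 + x / r) * (y / (al * y + (1 - al) * x)) ^+ 2 <= 3 * (y ^+ 2 / r ^+ 2) + 4 * (x / r).
Proof.
move=> r0 rx ry /andP[al0 al1].
set w := al * y + (1 - al) * x.
have rw : r <= w.
  rewrite -[r]mul1r -(subrK al 1) mulrDl addrC /w.
  by apply: lerD; apply: ler_wpM2l; rewrite ?subr_ge0.
have w0 : 0 < w := lt_le_trans r0 rw.
have y0 : 0 <= y := le_trans (ltW r0) ry.
have x0 : 0 <= x := le_trans (ltW r0) rx.
set q := y / w.
have q0 : 0 <= q by rewrite divr_ge0 ?(ltW w0).
have qw : q * w = y by rewrite /q divfK // lt0r_neq0.
have qy : q <= y / r by rewrite /q ler_pdivrMr // mulrAC ler_pdivlMr // ler_wpM2l.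
have q_sq : q ^+ 2 <= y ^+ 2 / r ^+ 2.
  by rewrite -expr_div_n; apply: lerXn2r; rewrite ?nnegrE // divr_ge0 ?(ltW r0).
(* [x <= 2 w] when [al <= 1/2], and [q <= 2] otherwise *)
have xq_sq : x * q ^+ 2 <= 2 * (y ^+ 2 / r) + 4 * x.
  have [al_small|al_big] := leP al (1 / 2).
    have xw : x <= 2 * w by rewrite /w; nra.
    apply: le_trans (ler_wpM2r (sqr_ge0 q) xw) _.
    have -> : 2 * w * q ^+ 2 = 2 * y * q by rewrite -qw; ring.
    apply: le_trans (ler_wpM2l (mulr_ge0 (ler0n _ 2) y0) qy) _.
    suff -> : 2 * y * (y / r) = 2 * (y ^+ 2 / r) by rewrite lerDl mulr_ge0.
    by rewrite expr2; ring.
  have q2 : q <= 2 by rewrite /q ler_pdivrMr // mulrC /w; nra.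
  have q4 : q ^+ 2 <= 4.
    rewrite (_ : 4 = 2 ^+ 2 :> R); last by rewrite expr2; ring.
    by apply: lerXn2r; rewrite ?nnegrE.
  apply: le_trans (ler_wpM2l x0 q4) _.
  by rewrite mulrC lerDr mulr_ge0 // divr_ge0 ?sqr_ge0 ?(ltW r0).
have rn : r != 0 by rewrite lt0r_neq0.
have -> : (1 + x / r) * q ^+ 2 = q ^+ 2 + x * q ^+ 2 / r by field.
have -> : 3 * (y ^+ 2 / r ^+ 2) + 4 * (x / r) =
    y ^+ 2 / r ^+ 2 + (2 * (y ^+ 2 / r) + 4 * x) / r by field.
by apply: lerD => //; rewrite ler_pM2r // invr_gt0.
Qed.

Lemma rate_of_recursion (delta : nat -> R) (M : R) : 0 <= M ->
  (forall k al, 0 <= al <= 1 -> delta k.+1 <= (1 - al) * delta k + al ^+ 2 * M) ->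
  forall k, (1 <= k)%N -> delta k <= 4 * M / k.+1%:R.
Proof.
move=> M0 rec; elim=> [//|[_ _|k IHk _]].
  have := rec 0%N 1; rewrite lexx ler01 subrr mul0r add0r expr1n mul1r => /(_ isT) d1.
  by apply: le_trans d1 _; rewrite ler_pdivlMr ?ltr0n // mulrC ler_wpM2r // ler_nat.
move/(_ isT): IHk => IHk.
set c : R := k.+2%:R.
have c1 : 1 <= c by rewrite ler1n.
have c0 : 0 < c := lt_le_trans ltr01 c1.
have c10 : 0 < c + 1 := addr_gt0 c0 ltr01.
(* the step size [al = 2 / (k + 3)] of the classical Frank-Wolfe analysis *)
have al01 : 0 <= 2 / (c + 1) <= 1.
  by rewrite divr_ge0 ?(ltW c10) //= ler_pdivrMr // mul1r (_ : 2 = 1 + 1) // lerD2r.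
have cS : k.+3%:R = c + 1 :> R by rewrite /c natr1.
apply: le_trans (rec k.+1 _ al01) _; rewrite cS -/c.
have al1 : 0 <= 1 - 2 / (c + 1) by case/andP: al01 => _; rewrite subr_ge0.
apply: le_trans (lerD (ler_wpM2l al1 IHk) (lexx _)) _.
rewrite -subr_ge0 (_ : _ - _ = 4 * M / (c * (c + 1) ^+ 2)).
  by rewrite divr_ge0 ?mulr_ge0 ?exprn_ge0 ?(ltW c0) ?(ltW c10).
by field; rewrite !lt0r_neq0.
Qed.

Lemma rate_constant_le (L a r K : R) : 0 < L -> 0 < a -> a <= 1 -> 0 < r -> 1 <= K ->
  4 * (L * (3 / (a ^+ 2 * r ^+ 2) + 4 / (a * r))) / (K + 1) <=
  32 * L * (1 + 1 / (a * r)) / (a ^+ 2 * r * K).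
Proof.
move=> L0 a0 a1 r0 K1.
have K0 : 0 < K := lt_le_trans ltr01 K1.
set M := L * (3 / (a ^+ 2 * r ^+ 2) + 4 / (a * r)).
have M0 : 0 <= M.
  by rewrite mulr_ge0 ?addr_ge0 ?divr_ge0 ?mulr_ge0 ?exprn_ge0 ?(ltW L0) ?(ltW a0) ?(ltW r0).
apply: (@le_trans _ _ (4 * M / K)).
  apply: ler_wpM2l; first exact: mulr_ge0 (ler0n _ 4) M0.
  by rewrite lef_pV2 ?posrE ?addr_gt0 // lerDl.
rewrite -subr_ge0.
have -> : 32 * L * (1 + 1 / (a * r)) / (a ^+ 2 * r * K) - 4 * M / K =
    L * (16 * (2 - a) / (a ^+ 2 * r) + 4 * (8 - 3 * a) / (a ^+ 3 * r ^+ 2)) / K.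
  by rewrite /M; field; rewrite !lt0r_neq0.
by rewrite divr_ge0 ?mulr_ge0 ?addr_ge0 ?divr_ge0 ?mulr_ge0 ?exprn_ge0
  ?(ltW L0) ?(ltW a0) ?(ltW r0) ?(ltW K0) //; lra.
Qed.

End numeric.

Lemma is_policy_pqa_step (R : realType) (n m : nat) (P : 'I_n -> 'I_m -> 'I_n -> R)
    (rho : 'I_n -> R) (gamma : R) (F : 'M[R]_(n, m) -> R) (eta : R) (pk pk1 : 'M[R]_(n, m)) :
  pqa_step P F gamma rho eta pk pk1 -> is_policy pk1.
Proof. by move=> step s; case: (step s). Qed.

Section pqa.
Variables (R : realType) (n m : nat) (P : 'I_n -> 'I_m -> 'I_n -> R).
Variables (rho : 'I_n -> R) (gamma : R) (F : 'M[R]_(n, m) -> R) (rho_min U L : R).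
Hypothesis kP : is_kernel P.
Hypothesis rho_distr : is_distr rho.
Hypothesis gamma01 : 0 <= gamma < 1.
Hypothesis F_concave : forall mu1 mu2 (t : R),
  occ_set P gamma rho mu1 -> occ_set P gamma rho mu2 -> 0 <= t <= 1 ->
  t * F mu1 + (1 - t) * F mu2 <= F (t *: mu1 + (1 - t) *: mu2).
Hypothesis F_diff : forall mu, occ_set P gamma rho mu -> differentiable F mu.
Hypothesis rho_min_gt0 : 0 < rho_min.
Hypothesis rho_min_le : forall s, rho_min <= rho s.
Hypothesis Gamma_bounds : forall p, is_policy p -> forall s a,
  0 <= pseudo_reward P F gamma rho p s a <= U.
Hypothesis L_gt0 : 0 < L.
Hypothesis G_smooth : forall p p', is_policy p -> is_policy p' ->
  `|Gobj P F gamma rho p - Gobj P F gamma rho p'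
    - frob_inner (grad (Gobj P F gamma rho) p') (p - p')| <= L / 2 * sqnorm2 (p - p').

Local Notation G := (Gobj P F gamma rho).
Local Notation state_occ := (state_occ P rho gamma).
Local Notation Q pk := (Qfun P gamma pk (pseudo_reward P F gamma rho pk)).
Local Notation eta := (rho_min / L).

Definition pqa_const : R :=
  L * (3 / ((1 - gamma) ^+ 2 * rho_min ^+ 2) + 4 / ((1 - gamma) * rho_min)).

Lemma rho_gt0 s : 0 < rho s.
Proof. exact: lt_le_trans rho_min_gt0 (rho_min_le s). Qed.

Definition prox_penalty (pk x : 'M[R]_(n, m)) : R :=
  \sum_s state_occ pk s / (2 * eta) * \sum_a (x s a - pk s a) ^+ 2.

Definition surrogate (pk x : 'M[R]_(n, m)) : R :=
  G pk + \sum_s state_occ pk s * \sum_a (x s a - pk s a) * Q pk s a - prox_penalty pk x.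

Lemma pqa_const_ge0 : 0 <= pqa_const.
Proof.
have g1 := one_sub_gamma_gt0 gamma01.
by rewrite mulr_ge0 ?addr_ge0 ?divr_ge0 ?mulr_ge0 ?exprn_ge0 ?(ltW L_gt0) ?(ltW g1)
  ?(ltW rho_min_gt0).
Qed.

Variable pk : 'M[R]_(n, m).
Hypothesis polk : is_policy pk.

Lemma smooth_le_prox_penalty (x : 'M[R]_(n, m)) :
  L / 2 * sqnorm2 (x - pk) <= prox_penalty pk x.
Proof.
rewrite sqnorm2E mulr_sumr; apply: ler_sum => s _.
under eq_bigr do rewrite mxBE.
apply: ler_wpM2r; first by apply: sumr_ge0 => a _; exact: sqr_ge0.
have d_ge := le_trans (rho_min_le s) (rho_le_state_occ kP rho_distr gamma01 polk s).
rewrite -subr_ge0 (_ : _ - _ = L * (state_occ pk s - rho_min) / (2 * rho_min)).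
  by rewrite divr_ge0 ?mulr_ge0 ?subr_ge0 ?(ltW L_gt0) ?(ltW rho_min_gt0).
by field; rewrite !lt0r_neq0.
Qed.

Lemma policy_gradient_pk (x : 'M[R]_(n, m)) : is_policy x ->
  frob_inner (grad G pk) (x - pk) =
  \sum_s state_occ pk s * \sum_a (x s a - pk s a) * Q pk s a.
Proof.
move=> polx; rewrite (policy_gradient kP rho_distr gamma01 F_diff Gamma_bounds
  (ltW L_gt0) G_smooth polk polx).
by apply: eq_bigr => s _; congr (_ * _); apply: eq_bigr => a _; rewrite mxBE.
Qed.

Lemma surrogate_le_G (x : 'M[R]_(n, m)) : is_policy x -> surrogate pk x <= G x.
Proof.
move=> polx; have := G_smooth polx polk; rewrite ler_norml => /andP[lower _].
rewrite /surrogate -policy_gradient_pk //.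
have := smooth_le_prox_penalty x; lra.
Qed.

Lemma G_sub_le_surrogate (x : 'M[R]_(n, m)) : is_policy x ->
  G x - (L / 2 * sqnorm2 (x - pk) + prox_penalty pk x) <= surrogate pk x.
Proof.
move=> polx; have := G_smooth polx polk; rewrite ler_norml => /andP[_ upper].
rewrite /surrogate -policy_gradient_pk //; lra.
Qed.

Lemma surrogate_le_step (pk1 x : 'M[R]_(n, m)) :
  pqa_step P F gamma rho eta pk pk1 -> is_policy x -> surrogate pk x <= surrogate pk pk1.
Proof.
move=> step polx; rewrite /surrogate /prox_penalty -!addrA lerD2l -!sumrB.
apply: ler_sum => s _.
apply: (@simplex_proj_prox _ _ (fun a => pk s a) (fun a => pk1 s a) (fun a => x s a)
  (fun a => Q pk s a)); first by rewrite divr_gt0.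
  by case/andP: (state_occ_bounds kP rho_distr gamma01 polk s).
by have [_ proj] := step s; exact: proj _ (polx s).
Qed.

Variable pistar : 'M[R]_(n, m).
Hypothesis polstar : is_policy pistar.

Variable al : R.
Hypothesis al01 : 0 <= al <= 1.

Local Notation pim := (mix_policy P rho gamma al pistar pk).

Lemma G_mix_ge : al * G pistar + (1 - al) * G pk <= G pim.
Proof.
rewrite /Gobj (occ_mix kP rho_distr gamma01 rho_gt0 polstar polk al01).
by apply: F_concave => //; [exists pistar | exists pk].
Qed.

Lemma mix_state_cost_le s :
  (L / 2 + state_occ pk s / (2 * eta)) * \sum_a (pim s a - pk s a) ^+ 2 <=
  L * al ^+ 2 *
    (3 * (state_occ pistar s ^+ 2 / rho_min ^+ 2) + 4 * (state_occ pk s / rho_min)).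
Proof.
set x := state_occ pk s; set y := state_occ pistar s.
set w := mix_weight P rho gamma al pistar pk s.
have w0 : 0 < w := mix_weight_gt0 kP rho_distr gamma01 rho_gt0 polstar polk al01 s.
have xr := le_trans (rho_min_le s) (rho_le_state_occ kP rho_distr gamma01 polk s).
have yr := le_trans (rho_min_le s) (rho_le_state_occ kP rho_distr gamma01 polstar s).
have -> : \sum_a (pim s a - pk s a) ^+ 2 =
    (al * y / w) ^+ 2 * \sum_a (pistar s a - pk s a) ^+ 2.
  rewrite mulr_sumr; apply: eq_bigr => a _.
  by rewrite (mix_policy_subr kP rho_distr gamma01 rho_gt0 polstar polk al01) exprMn.
move: (sum_sq_simplex_sub_le (polstar s) (polk s)); set S := \sum_a _ => S2.
have := mix_ratio_bound rho_min_gt0 xr yr al01; rewrite -/w.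
set r := (1 + x / rho_min) * (y / w) ^+ 2 => ratio.
have x0 : 0 <= x := le_trans (ltW rho_min_gt0) xr.
have r0 : 0 <= r by rewrite mulr_ge0 ?sqr_ge0 // addr_ge0 // divr_ge0 ?(ltW rho_min_gt0).
have La0 : 0 <= L * al ^+ 2 by rewrite mulr_ge0 ?sqr_ge0 ?(ltW L_gt0).
rewrite (_ : _ * _ = L * al ^+ 2 * r * (S / 2)); last first.
  by rewrite /r; field; rewrite !lt0r_neq0.
apply: (@le_trans _ _ (L * al ^+ 2 * r * 1)).
  apply: ler_wpM2l; first exact: mulr_ge0 La0 r0.
  by rewrite ler_pdivrMr // mul1r.
by rewrite mulr1; apply: ler_wpM2l.
Qed.

Lemma mix_cost_le : L / 2 * sqnorm2 (pim - pk) + prox_penalty pk pim <= al ^+ 2 * pqa_const.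
Proof.
have g1 := one_sub_gamma_gt0 gamma01.
rewrite sqnorm2E mulr_sumr /prox_penalty -big_split /=.
under eq_bigr do under eq_bigr do rewrite mxBE.
under eq_bigr do rewrite -mulrDl.
apply: le_trans (ler_sum _ (fun s _ => mix_state_cost_le s)) _.
rewrite -mulr_sumr /pqa_const (mulrCA (al ^+ 2)) [in leRHS]mulrA; apply: ler_wpM2l.
  by rewrite mulr_ge0 ?sqr_ge0 ?(ltW L_gt0).
rewrite big_split /= -!mulr_sumr -!mulr_suml (sum_state_occ kP rho_distr gamma01 polk).
apply: lerD.
  rewrite mulrA [leRHS](_ : _ = 3 / rho_min ^+ 2 * (1 / (1 - gamma)) ^+ 2); last first.
    by field; rewrite !lt0r_neq0.
  rewrite mulrAC; apply: ler_wpM2l; first by rewrite divr_ge0 ?sqr_ge0.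
  exact: sum_state_occ_sq_le.
suff -> : 4 * (1 / (1 - gamma) / rho_min) = 4 / ((1 - gamma) * rho_min) by [].
by field; rewrite !lt0r_neq0.
Qed.

Lemma pqa_gap_rec (pk1 : 'M[R]_(n, m)) : pqa_step P F gamma rho eta pk pk1 ->
  G pistar - G pk1 <= (1 - al) * (G pistar - G pk) + al ^+ 2 * pqa_const.
Proof.
move=> step; have polm := is_policy_mix kP rho_distr gamma01 rho_gt0 polstar polk al01.
have := surrogate_le_G (is_policy_pqa_step step).
have := surrogate_le_step step polm.
have := G_sub_le_surrogate polm.
have := mix_cost_le; have := G_mix_ge; lra.
Qed.

End pqa.

Theorem theorem4 (R : realType) (n m : nat)
  (P : 'I_n -> 'I_m -> 'I_n -> R) (rho : 'I_n -> R) (gamma : R)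
  (F : 'M[R]_(n, m) -> R) (rho_min U L : R)
  (pistar : 'M[R]_(n, m)) (pi : nat -> 'M[R]_(n, m)) :
  is_kernel P ->
  is_distr rho ->
  0 <= gamma < 1 ->
  (* F concave on K and differentiable at every point of K *)
  (forall mu1 mu2 (t : R), occ_set P gamma rho mu1 -> occ_set P gamma rho mu2 ->
     0 <= t <= 1 ->
     t * F mu1 + (1 - t) * F mu2 <= F (t *: mu1 + (1 - t) *: mu2)) ->
  (forall mu, occ_set P gamma rho mu -> differentiable F mu) ->
  (* (i) *)
  0 < rho_min -> (forall s, rho_min <= rho s) ->
  (* (ii) *)
  0 <= U ->
  (forall p, is_policy p -> forall s a,
     0 <= pseudo_reward P F gamma rho p s a <= U) ->
  (* (iii) L-smoothness of G *)
  0 < L ->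
  (forall p p', is_policy p -> is_policy p' ->
     `| Gobj P F gamma rho p - Gobj P F gamma rho p'
        - frob_inner (grad (Gobj P F gamma rho) p') (p - p') |
     <= L / 2 * sqnorm2 (p - p')) ->
  (* pi* is a maximizer of G over policies *)
  is_policy pistar ->
  (forall p, is_policy p -> Gobj P F gamma rho p <= Gobj P F gamma rho pistar) ->
  (* PQA iterates with eta = rho_min / L *)
  is_policy (pi 0%N) ->
  (forall k, pqa_step P F gamma rho (rho_min / L) (pi k) (pi k.+1)) ->
  forall K : nat, (1 <= K)%N ->
    Gobj P F gamma rho pistar - Gobj P F gamma rho (pi K)
    <= 32 * L * (1 + 1 / ((1 - gamma) * rho_min))
       / ((1 - gamma) ^+ 2 * rho_min * K%:R).
Proof.
move=> kP rho_distr gamma01 F_concave F_diff rho_min_gt0 rho_min_le _ Gamma_bounds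
  L_gt0 G_smooth polstar _ pol0 step K K1.
have pol k : is_policy (pi k) by case: k => // k; exact: is_policy_pqa_step (step k).
have rec k al : 0 <= al <= 1 ->
    Gobj P F gamma rho pistar - Gobj P F gamma rho (pi k.+1) <=
    (1 - al) * (Gobj P F gamma rho pistar - Gobj P F gamma rho (pi k)) +
    al ^+ 2 * pqa_const gamma rho_min L.
  move=> al01; have := pqa_gap_rec kP rho_distr gamma01 F_concave F_diff rho_min_gt0
    rho_min_le Gamma_bounds L_gt0 G_smooth (pol k) polstar al01 (step k).
  by apply.
have C0 := pqa_const_ge0 gamma01 rho_min_gt0 L_gt0.
apply: le_trans (rate_of_recursion C0 rec K1) _.
rewrite -[K.+1%:R]natr1 /pqa_const.
apply: rate_constant_le => //; first exact: one_sub_gamma_gt0.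
- by rewrite lerBlDr lerDl; case/andP: gamma01.
- by rewrite ler1n.
Qed.
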